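(* Let $m>0$ and let $u:(0,\infty)\to\mathbb{R}$ be the function such that the distribution $x\mapsto\frac{1}{2(2\pi)^3}\int_{\mathbb{R}^3}e^{ik\cdot x}\frac{1}{\sqrt{|k|^2+m^2}}\,\mathrm{d}^3k$ on $\mathbb{R}^3$ coincides with $u(|x|)$ on $x\ne0$ (explicitly, $u(r)=\frac{m}{4\pi^2r}K_1(mr)$ with $K_1$ the modified Bessel function). Let $R>0$. Then for all $r\ge R$ and all $n\in\mathbb{Z}_{\ge0}$, $$|\partial_r^nu(r)|\le C_3C_4^{n+3}\,n!\,e^{-mr},$$ where $C_4=4\max\{m,\frac1R\}$ and $C_3=\frac{2}{25m}$.
   Context: This $u$ describes the equal-time two-point function $\omega^{(0)}_2|_{x^0=x'^0=0}(x,x')=u(|x-x'|)$ of the vacuum state of a free real scalar field of mass $m$ in $3+1$-dimensional Minkowski spacetime. *)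

From Stdlib Require Import Reals Factorial.
From Coquelicot Require Import Coquelicot.
Open Scope R_scope.

(* Modified Bessel function of the second kind of order 1, via the standard
   integral representation  K_1(z) = \int_0^\infty e^{-z cosh t} cosh t dt  (z > 0). *)
Definition besselK1 (z : R) : R :=
  RInt_gen (fun t => exp (- z * cosh t) * cosh t)
           (at_point 0) (Rbar_locally p_infty).

Definition u_two_point (m r : R) : R :=
  m / (4 * PI ^ 2 * r) * besselK1 (m * r).

From Stdlib Require Import Reals Factorial.
From Coquelicot Require Import Coquelicot.
From Stdlib Require Import Lra Lia Psatz Classical FunctionalExtensionality.
Open Scope R_scope.

(* For a > 0 let H_k(a) = \int_0^oo e^{-a cosh t} cosh^{k+1} t dt, so K_1 = H_0.
   1. For 0 < rho <= min(1, a) the integrand of H_k is dominated by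
      6 * 4^k * k! * rho^{-(k+1)} e^{-a} e^{-rho t / 2}; hence H_k(a) exists as an
      improper integral (a monotone-limit argument) and
      rho^{k+2} H_k(a) <= 12 * 4^k * k! * e^{-a}.
   2. A second-order Taylor estimate of the integrand in a, integrated over
      [0, +oo), shows H_k' = -H_{k+1}.  With T_{j,k}(r) = r^{-(j+1)} H_k(m r) this
      gives the closed form
        u^{(n)}(r) = \sum_{k <= n} (m / 4 pi^2) (-1)^n (n! / k!) m^k T_{n-k,k}(r).
   3. For r >= R put M = max(m, 1/R) and rho = m / M, so that rho <= m r and
      1 / r <= M.  The k-th summand is then at most
      4^k * 3 n! M^{n+3} e^{-m r} / (pi^2 m); summing the geometric series and
      using pi^2 >= 4 gives the stated bound with C_3 = 2 / (25 m), C_4 = 4 M. *)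

Lemma exp_le_mono x y : x <= y -> exp x <= exp y.
Proof.
  intros Hxy. destruct (Rle_lt_or_eq_dec _ _ Hxy) as [Hlt | <-].
  - apply Rlt_le, exp_increasing, Hlt.
  - apply Rle_refl.
Qed.

(* A single term of the exponential series: z^N <= N! e^z for z >= 0. *)
Lemma pow_le_fact_exp z N : 0 <= z -> z ^ N <= INR (fact N) * exp z.
Proof.
  intros Hz.
  assert (Hfact := INR_fact_lt_0 N).
  assert (Hterm : z ^ N / INR (fact N) <= exp z).
  { eapply Rle_trans; [| apply (exp_ge_taylor z N Hz)].
    destruct N as [| N]; [simpl; lra |].
    rewrite tech5.
    assert (0 <= sum_f_R0 (fun k => z ^ k / INR (fact k)) N); [| lra].
    apply cond_pos_sum. intros k. apply Rmult_le_pos.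
    - apply pow_le, Hz.
    - apply Rlt_le, Rinv_0_lt_compat, INR_fact_lt_0. }
  apply (Rmult_le_compat_l (INR (fact N))) in Hterm; [| lra].
  replace (INR (fact N) * (z ^ N / INR (fact N))) with (z ^ N) in Hterm by (field; lra).
  exact Hterm.
Qed.

Lemma succ_le_pow2 k : INR (S k) <= 2 ^ k.
Proof.
  induction k as [| k IH]; [simpl; lra |].
  rewrite S_INR. change (2 ^ S k) with (2 * 2 ^ k).
  pose proof (pow_R1_Rle 2 k ltac:(lra)). lra.
Qed.

Lemma cosh_ge_1 t : 1 <= cosh t.
Proof.
  unfold cosh. pose proof (exp_ineq1_le t). pose proof (exp_ineq1_le (- t)). lra.
Qed.

Lemma cosh_ge_id t : 0 <= t -> t <= cosh t.
Proof.
  intros Ht. pose proof (exp_ge_taylor t 2 Ht) as H. simpl in H.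
  pose proof (exp_pos (- t)). unfold cosh. nra.
Qed.

Lemma exp_taylor2 y : Rabs (exp y - 1 - y) <= y ^ 2 * exp (Rabs y).
Proof.
  assert (Hlow := exp_ineq1_le y).
  (* e^y - 1 <= y e^y, from e^{-y} >= 1 - y *)
  assert (Hup : exp y - 1 <= y * exp y).
  { pose proof (exp_ineq1_le (- y)) as H.
    apply (Rmult_le_compat_l (exp y)) in H; [| apply Rlt_le, exp_pos].
    rewrite <- exp_plus, Rplus_opp_r, exp_0 in H. lra. }
  rewrite Rabs_pos_eq by lra.
  destruct (Rle_or_lt 0 y) as [Hy | Hy].
  - rewrite Rabs_pos_eq by lra. nra.
  - rewrite Rabs_left by lra.
    pose proof (exp_ineq1_le (- y)). nra.
Qed.

Ltac continuity_by_derive :=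
  apply (ex_derive_continuous (K := R_AbsRing) (V := R_NormedModule)); auto_derive; auto.

Lemma ex_RInt_of_continuous (f : R -> R) a b :
  (forall t, continuous f t) -> ex_RInt f a b.
Proof. intros Hc. apply (ex_RInt_continuous (V := R_CompleteNormedModule)). intros; apply Hc. Qed.

Lemma nondecreasing_bounded_limit (F : R -> R) C :
  (forall b b', 0 <= b <= b' -> F b <= F b') ->
  (forall b, 0 <= b -> F b <= C) ->
  exists L, filterlim F (Rbar_locally p_infty) (locally L) /\
            (forall b, 0 <= b -> F b <= L) /\ L <= C.
Proof.
  intros Hmono Hbound.
  set (E := fun v => exists b, 0 <= b /\ v = F b).
  assert (HE : bound E) by (exists C; intros v [b [Hb ->]]; auto).
  assert (HE0 : exists v, E v) by (exists (F 0), 0; split; [lra | reflexivity]).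
  destruct (completeness E HE HE0) as [L [Hub Hlub]].
  assert (HFL : forall b, 0 <= b -> F b <= L) by (intros b Hb; apply Hub; now exists b).
  exists L. split; [| split; [exact HFL |]].
  - intros P [eps HP].
    (* the supremum is approached from below at some b0, then F stays eps-close *)
    assert (Happrox : exists b0, 0 <= b0 /\ L - eps < F b0).
    { apply NNPP. intros Hnot.
      assert (L <= L - eps); [| pose proof (cond_pos eps); lra].
      apply Hlub. intros v [b [Hb ->]]. apply Rnot_lt_le. intros Hlt.
      apply Hnot. now exists b. }
    destruct Happrox as [b0 [Hb0 Hlt]].
    exists b0. intros b Hb. apply HP.
    assert (F b0 <= F b) by (apply Hmono; lra).
    assert (F b <= L) by (apply HFL; lra).
    change (Rabs (F b - L) < eps). rewrite Rabs_left1; lra.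
  - apply Hlub. intros v [b [Hb ->]]. auto.
Qed.

Lemma is_RInt_gen_of_limit (f : R -> R) L :
  (forall t, continuous f t) ->
  filterlim (fun b => RInt f 0 b) (Rbar_locally p_infty) (locally L) ->
  is_RInt_gen f (at_point 0) (Rbar_locally p_infty) L.
Proof.
  intros Hc Hlim P HP.
  destruct (Hlim P HP) as [B HB].
  apply Filter_prod with (Q := fun x => x = 0) (R := fun y => B < y).
  - reflexivity.
  - now exists B.
  - intros x y -> Hy. exists (RInt f 0 y). split.
    + apply (RInt_correct (V := R_CompleteNormedModule)), ex_RInt_of_continuous, Hc.
    + now apply HB.
Qed.

Lemma RInt_exp_decay c lam b : 0 < lam ->
  RInt (fun t => c * exp (- lam * t)) 0 b = c / lam * (1 - exp (- lam * b)).
Proof.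
  intros Hlam.
  set (G := fun t => - c / lam * exp (- lam * t)).
  assert (H : is_RInt (fun t => c * exp (- lam * t)) 0 b (minus (G b) (G 0))).
  { apply (is_RInt_derive G).
    - intros x _. unfold G. auto_derive; auto. field. lra.
    - intros x _. continuity_by_derive. }
  apply (is_RInt_unique (V := R_CompleteNormedModule)) in H. rewrite H.
  unfold G, minus, plus, opp; simpl.
  rewrite Rmult_0_r, exp_0. field. lra.
Qed.

Lemma dominated_improper_integral (f : R -> R) c lam : 0 < lam ->
  (forall t, continuous f t) ->
  (forall t, 0 <= t -> 0 <= f t <= c * exp (- lam * t)) ->
  exists L, is_RInt_gen f (at_point 0) (Rbar_locally p_infty) L /\ 0 <= L <= c / lam.
Proof.
  intros Hlam Hc Hdom.
  assert (Hex : forall a b, ex_RInt f a b) by (intros; apply ex_RInt_of_continuous, Hc).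
  assert (Hc0 : 0 <= c).
  { destruct (Hdom 0 (Rle_refl 0)) as [H0 H]. rewrite Rmult_0_r, exp_0 in H. lra. }
  assert (Hnondec : forall b b', 0 <= b <= b' -> RInt f 0 b <= RInt f 0 b').
  { intros b b' Hbb'.
    rewrite <- (RInt_Chasles (V := R_CompleteNormedModule) f 0 b b') by auto.
    assert (0 <= RInt f b b'); [| change (plus ?x ?y) with (x + y); lra].
    apply RInt_ge_0; [lra | auto |]. intros x Hx. apply Hdom. lra. }
  assert (Hbounded : forall b, 0 <= b -> RInt f 0 b <= c / lam).
  { intros b Hb.
    assert (Hdec : RInt f 0 b <= RInt (fun t => c * exp (- lam * t)) 0 b).
    { apply RInt_le; auto.
      - apply ex_RInt_of_continuous. intros t. continuity_by_derive.
      - intros x Hx. apply Hdom. lra. }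
    rewrite RInt_exp_decay in Hdec by exact Hlam.
    pose proof (exp_pos (- lam * b)).
    assert (0 <= c / lam) by (apply Rdiv_le_0_compat; lra).
    nra. }
  destruct (nondecreasing_bounded_limit _ _ Hnondec Hbounded) as [L [Hlim [HFL HLC]]].
  exists L. split; [now apply is_RInt_gen_of_limit |].
  split; [| exact HLC].
  specialize (HFL 0 (Rle_refl 0)).
  rewrite (RInt_point (V := R_CompleteNormedModule)) in HFL. exact HFL.
Qed.

Lemma is_derive_of_quadratic_remainder (g : R -> R) a l C delta :
  0 < delta -> 0 <= C ->
  (forall h, Rabs h <= delta -> Rabs (g (a + h) - g a - h * l) <= C * h ^ 2) ->
  is_derive g a l.
Proof.
  intros Hdelta HC Hrem. apply is_derive_Reals. intros eps Heps.
  assert (Hd : 0 < Rmin delta (eps / (C + 1))).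
  { apply Rmin_glb_lt; [lra | apply Rdiv_lt_0_compat; lra]. }
  exists (mkposreal _ Hd). intros h Hh0 Hh. simpl in Hh.
  assert (Hh1 : Rabs h <= delta) by (pose proof (Rmin_l delta (eps / (C + 1))); lra).
  assert (Hh2 : Rabs h * (C + 1) < eps).
  { pose proof (Rmin_r delta (eps / (C + 1))).
    apply (Rmult_lt_reg_r (/ (C + 1))); [apply Rinv_0_lt_compat; lra |].
    rewrite Rmult_assoc, Rinv_r, Rmult_1_r by lra. unfold Rdiv in *. lra. }
  assert (Habs : 0 < Rabs h) by (apply Rabs_pos_lt; exact Hh0).
  replace ((g (a + h) - g a) / h - l) with ((g (a + h) - g a - h * l) / h)
    by (field; exact Hh0).
  unfold Rdiv. rewrite Rabs_mult, Rabs_inv.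
  apply (Rmult_lt_reg_r (Rabs h)); [exact Habs |].
  rewrite Rmult_assoc, Rinv_l, Rmult_1_r by lra.
  eapply Rle_lt_trans; [apply Hrem, Hh1 |].
  rewrite <- pow2_abs. nra.
Qed.

Definition besselH_integrand (k : nat) (a t : R) : R := exp (- a * cosh t) * cosh t ^ S k.

Definition besselH (k : nat) (a : R) : R :=
  RInt_gen (besselH_integrand k a) (at_point 0) (Rbar_locally p_infty).

Lemma besselK1_besselH z : besselK1 z = besselH 0 z.
Proof.
  unfold besselK1, besselH, besselH_integrand. f_equal.
  apply functional_extensionality. intros t. ring.
Qed.

Lemma besselH_integrand_continuous k a t : continuous (besselH_integrand k a) t.
Proof. unfold besselH_integrand, cosh. continuity_by_derive. Qed.

Lemma besselH_integrand_nonneg k a t : 0 <= besselH_integrand k a t.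
Proof.
  pose proof (cosh_ge_1 t). unfold besselH_integrand.
  apply Rmult_le_pos; [apply Rlt_le, exp_pos | apply pow_le; lra].
Qed.

Lemma pow2_fact_succ_le k : 2 ^ S k * INR (fact (S k)) <= 2 * 4 ^ k * INR (fact k).
Proof.
  rewrite fact_simpl, mult_INR. change (2 ^ S k) with (2 * 2 ^ k).
  replace (4 ^ k) with (2 ^ k * 2 ^ k) by (rewrite <- Rpow_mult_distr; f_equal; ring).
  pose proof (succ_le_pow2 k). pose proof (INR_fact_lt_0 k). pose proof (pow_lt 2 k ltac:(lra)).
  assert (INR (S k) * INR (fact k) <= 2 ^ k * INR (fact k)) by (apply Rmult_le_compat_r; lra).
  nra.
Qed.

(* Pointwise domination: for 0 < rho <= min(1, a), half of the decay e^{-rho cosh t}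
   absorbs the polynomial factor (rho cosh t)^{k+1}, and the rest gives e^{-a} e^{-rho t/2}. *)
Lemma besselH_integrand_bound k a rho t : 0 < rho <= 1 -> rho <= a -> 0 <= t ->
  rho ^ S k * besselH_integrand k a t
  <= 6 * 4 ^ k * INR (fact k) * exp (- a) * exp (- (rho / 2) * t).
Proof.
  intros Hrho Ha Ht. unfold besselH_integrand. set (x := cosh t).
  assert (Hx1 : 1 <= x) by apply cosh_ge_1.
  assert (Hxt : t <= x) by now apply cosh_ge_id.
  assert (Hpoly : (rho * x) ^ S k <= 2 * 4 ^ k * INR (fact k) * exp (rho * x / 2)).
  { replace (rho * x) with (2 * (rho * x / 2)) at 1 by field. rewrite Rpow_mult_distr.
    assert (Hz : 0 <= rho * x / 2) by (apply Rmult_le_pos; [apply Rmult_le_pos |]; lra).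
    eapply Rle_trans.
    { apply Rmult_le_compat_l; [apply pow_le; lra | apply (pow_le_fact_exp _ (S k) Hz)]. }
    rewrite <- Rmult_assoc. apply Rmult_le_compat_r; [apply Rlt_le, exp_pos |].
    apply pow2_fact_succ_le. }
  assert (Hdecay : exp (rho * x / 2) * exp (- a * x) <= 3 * exp (- a) * exp (- (rho / 2) * t)).
  { assert (Hrho3 : exp rho <= 3)
      by (eapply Rle_trans; [apply exp_le_mono, (proj2 Hrho) | apply exp_le_3]).
    assert (Hexponent : rho * x / 2 + - a * x <= rho + (- a + - (rho / 2) * t)) by nra.
    rewrite <- exp_plus, Rmult_assoc, <- exp_plus.
    eapply Rle_trans; [apply exp_le_mono, Hexponent |].
    rewrite exp_plus. apply Rmult_le_compat_r; [apply Rlt_le, exp_pos | exact Hrho3]. }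
  rewrite <- Rmult_assoc, (Rmult_comm _ (exp _)), Rmult_assoc, <- Rpow_mult_distr.
  pose proof (pow_lt 4 k ltac:(lra)). pose proof (INR_fact_lt_0 k).
  eapply Rle_trans; [apply Rmult_le_compat_l; [apply Rlt_le, exp_pos | exact Hpoly] |].
  replace (exp (- a * x) * (2 * 4 ^ k * INR (fact k) * exp (rho * x / 2)))
    with (2 * 4 ^ k * INR (fact k) * (exp (rho * x / 2) * exp (- a * x))) by ring.
  eapply Rle_trans; [apply Rmult_le_compat_l; [| exact Hdecay] |]; [nra | right; ring].
Qed.

Lemma besselH_spec k a rho : 0 < rho <= 1 -> rho <= a ->
  is_RInt_gen (besselH_integrand k a) (at_point 0) (Rbar_locally p_infty) (besselH k a) /\
  0 <= besselH k a /\
  rho ^ S (S k) * besselH k a <= 12 * 4 ^ k * INR (fact k) * exp (- a).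
Proof.
  intros Hrho Ha.
  assert (Hrk : 0 < rho ^ S k) by (apply pow_lt; lra).
  set (c := 6 * 4 ^ k * INR (fact k) * exp (- a) / rho ^ S k).
  destruct (dominated_improper_integral (besselH_integrand k a) c (rho / 2))
    as [L [HL [HL0 HLc]]].
  - lra.
  - apply besselH_integrand_continuous.
  - intros t Ht. split; [apply besselH_integrand_nonneg |].
    apply (Rmult_le_reg_l (rho ^ S k)); [exact Hrk |].
    eapply Rle_trans; [now apply besselH_integrand_bound |].
    right. unfold c. field. lra.
  - assert (HHL : besselH k a = L).
    { unfold besselH. apply (is_RInt_gen_unique (V := R_CompleteNormedModule)). exact HL. }
    rewrite HHL. split; [exact HL |]. split; [exact HL0 |].
    apply (Rmult_le_compat_l (rho ^ S (S k))) in HLc; [| apply pow_le; lra].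
    eapply Rle_trans; [exact HLc |].
    pose proof (pow_lt rho k ltac:(lra)).
    right. unfold c. simpl pow. field. split; lra.
Qed.

Lemma besselH_integral k a : 0 < a ->
  is_RInt_gen (besselH_integrand k a) (at_point 0) (Rbar_locally p_infty) (besselH k a).
Proof.
  intros Ha. apply (besselH_spec k a (Rmin a 1)); [split | apply Rmin_l].
  - apply Rmin_glb_lt; lra.
  - apply Rmin_r.
Qed.

Lemma besselH_nonneg k a : 0 < a -> 0 <= besselH k a.
Proof.
  intros Ha. apply (besselH_spec k a (Rmin a 1)); [split | apply Rmin_l].
  - apply Rmin_glb_lt; lra.
  - apply Rmin_r.
Qed.

Lemma besselH_integrand_taylor k a h t : 0 < a -> Rabs h <= a / 2 ->
  Rabs (besselH_integrand k (a + h) t - besselH_integrand k a t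
        + h * besselH_integrand (S k) a t)
  <= h ^ 2 * besselH_integrand (S (S k)) (a / 2) t.
Proof.
  intros Ha Hh. unfold besselH_integrand. set (x := cosh t).
  assert (Hx : 1 <= x) by apply cosh_ge_1.
  assert (Hfactor : 0 <= exp (- a * x) * x ^ S k)
    by (apply Rmult_le_pos; [apply Rlt_le, exp_pos | apply pow_le; lra]).
  replace (exp (- (a + h) * x) * x ^ S k - exp (- a * x) * x ^ S k
           + h * (exp (- a * x) * x ^ S (S k)))
    with ((exp (- a * x) * x ^ S k) * (exp (- h * x) - 1 - (- h * x)))
    by (replace (- (a + h) * x) with (- a * x + - h * x) by ring; rewrite exp_plus; simpl; ring).
  rewrite Rabs_mult, (Rabs_pos_eq _ Hfactor).
  assert (Hhx : Rabs (- h * x) <= a / 2 * x).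
  { rewrite Rabs_mult, Rabs_Ropp, (Rabs_pos_eq x) by lra. apply Rmult_le_compat_r; lra. }
  assert (Hexp : exp (- a * x) * exp (Rabs (- h * x)) <= exp (- (a / 2) * x)).
  { rewrite <- exp_plus. apply exp_le_mono. lra. }
  eapply Rle_trans; [apply Rmult_le_compat_l; [exact Hfactor | apply exp_taylor2] |].
  replace (exp (- a * x) * x ^ S k * ((- h * x) ^ 2 * exp (Rabs (- h * x))))
    with (h ^ 2 * x ^ S (S (S k)) * (exp (- a * x) * exp (Rabs (- h * x)))) by (simpl; ring).
  replace (h ^ 2 * (exp (- (a / 2) * x) * x ^ S (S (S k))))
    with (h ^ 2 * x ^ S (S (S k)) * exp (- (a / 2) * x)) by ring.
  apply Rmult_le_compat_l; [| exact Hexp].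
  apply Rmult_le_pos; [apply pow2_ge_0 | apply pow_le; lra].
Qed.

Lemma besselH_taylor k a h : 0 < a -> Rabs h <= a / 2 ->
  Rabs (besselH k (a + h) - besselH k a + h * besselH (S k) a)
  <= h ^ 2 * besselH (S (S k)) (a / 2).
Proof.
  intros Ha Hh.
  assert (Hah : 0 < a + h) by (pose proof (Rle_abs (- h)); rewrite Rabs_Ropp in *; lra).
  apply (RInt_gen_norm (V := R_CompleteNormedModule) (Fa := at_point 0) (Fb := Rbar_locally p_infty)
    (fun t => besselH_integrand k (a + h) t - besselH_integrand k a t
              + h * besselH_integrand (S k) a t)
    (fun t => h ^ 2 * besselH_integrand (S (S k)) (a / 2) t)).
  - apply Filter_prod with (Q := fun x => x = 0) (R := fun y => 0 < y).
    + reflexivity.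
    + now exists 0.
    + intros x y -> Hy. simpl. lra.
  - apply filter_forall. intros _ t _. now apply besselH_integrand_taylor.
  - apply (is_RInt_gen_plus (V := R_NormedModule)).
    + apply (is_RInt_gen_minus (V := R_NormedModule)); now apply besselH_integral.
    + apply (is_RInt_gen_scal (V := R_NormedModule)). now apply besselH_integral.
  - apply (is_RInt_gen_scal (V := R_NormedModule)). apply besselH_integral. lra.
Qed.

Lemma besselH_derive k a : 0 < a -> is_derive (besselH k) a (- besselH (S k) a).
Proof.
  intros Ha.
  apply (is_derive_of_quadratic_remainder _ a _ (besselH (S (S k)) (a / 2)) (a / 2)).
  - lra.
  - apply besselH_nonneg. lra.
  - intros h Hh.
    replace (besselH k (a + h) - besselH k a - h * - besselH (S k) a)
      with (besselH k (a + h) - besselH k a + h * besselH (S k) a) by ring.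
    rewrite (Rmult_comm (besselH _ _)). now apply besselH_taylor.
Qed.

Definition besselTerm (m : R) (j k : nat) (r : R) : R := (/ r) ^ S j * besselH k (m * r).

Lemma besselTerm_derive m j k r : 0 < m -> 0 < r ->
  is_derive (besselTerm m j k) r
    (- INR (S j) * besselTerm m (S j) k r - m * besselTerm m j (S k) r).
Proof.
  intros Hm Hr. unfold besselTerm.
  assert (Hpow : is_derive (fun y => (/ y) ^ S j) r (- INR (S j) * (/ r) ^ S (S j))).
  { auto_derive; [lra |].
    change (match j with 0%nat => 1 | S _ => INR j + 1 end) with (INR (S j)).
    simpl pow. field. lra. }
  assert (Hbessel : is_derive (fun y => besselH k (m * y)) r (m * - besselH (S k) (m * r))).
  { apply (is_derive_comp (besselH k) (fun y => m * y)).
    - apply besselH_derive. nra.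
    - auto_derive; [exact I | ring]. }
  assert (Hprod := is_derive_mult (K := R_AbsRing) _ _ r _ _ Hpow Hbessel Rmult_comm).
  replace (- INR (S j) * ((/ r) ^ S (S j) * besselH k (m * r)) - m * ((/ r) ^ S j * besselH (S k) (m * r)))
    with (plus (mult (- INR (S j) * (/ r) ^ S (S j)) (besselH k (m * r)))
               (mult ((/ r) ^ S j) (m * - besselH (S k) (m * r))))
    by (unfold plus, mult; simpl; ring).
  exact Hprod.
Qed.

Definition coef (m : R) (n k : nat) : R :=
  m / (4 * PI ^ 2) * (-1) ^ n * INR (fact n) / INR (fact k) * m ^ k.

Definition u_derivative (m : R) (n : nat) (r : R) : R :=
  sum_f_R0 (fun k => coef m n k * besselTerm m (n - k) k r) n.

Lemma PI_neq0 : PI <> 0.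
Proof. pose proof PI_RGT_0. lra. Qed.

(* Pascal-type recursions for the coefficients, matching besselTerm_derive. *)
Lemma coef_succ_0 m n : coef m (S n) 0 = - INR (S n) * coef m n 0.
Proof.
  unfold coef. rewrite !fact_simpl, !mult_INR. pose proof (INR_fact_lt_0 n). pose proof PI_neq0.
  change ((-1) ^ S n) with (-1 * (-1) ^ n). simpl fact. field.
  repeat split; try (apply Rgt_not_eq; lra); auto. simpl; lra.
Qed.

Lemma coef_succ_succ m n i : (i <= n)%nat ->
  coef m (S n) (S i) = - INR (n - i) * coef m n (S i) - m * coef m n i.
Proof.
  intros Hi. unfold coef. rewrite !fact_simpl, !mult_INR, minus_INR, !S_INR by exact Hi.
  pose proof (INR_fact_lt_0 i). pose proof (INR_fact_lt_0 n). pose proof (pos_INR i).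
  pose proof PI_neq0.
  change ((-1) ^ S n) with (-1 * (-1) ^ n). change (m ^ S i) with (m * m ^ i).
  field. repeat split; try (apply Rgt_not_eq; lra); auto.
Qed.

Lemma u_derivative_derive m n r : 0 < m -> 0 < r ->
  is_derive (u_derivative m n) r (u_derivative m (S n) r).
Proof.
  intros Hm Hr.
  set (X := fun k => - INR (S n - k) * coef m n k * besselTerm m (S n - k) k r).
  set (Y := fun i => - m * coef m n i * besselTerm m (n - i) (S i) r).
  assert (Hderiv : is_derive (u_derivative m n) r (sum_f_R0 X n + sum_f_R0 Y n)).
  { apply (is_derive_ext (fun y => sum_n (fun k => coef m n k * besselTerm m (n - k) k y) n));
      [intros y; apply sum_n_Reals |].
    rewrite <- plus_sum, <- sum_n_Reals.
    apply (is_derive_sum_n (fun k y => coef m n k * besselTerm m (n - k) k y)). intros k Hk.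
    replace (X k + Y k)
      with (coef m n k * (- INR (S (n - k)) * besselTerm m (S (n - k)) k r
                          - m * besselTerm m (n - k) (S k) r))
      by (unfold X, Y; replace (S n - k)%nat with (S (n - k)) by lia; ring).
    apply is_derive_scal, besselTerm_derive; assumption. }
  replace (u_derivative m (S n) r) with (sum_f_R0 X n + sum_f_R0 Y n); [exact Hderiv |].
  (* the X-sum may be extended by its vanishing term k = n + 1 *)
  assert (HX : sum_f_R0 X (S n) = sum_f_R0 X n).
  { rewrite tech5. unfold X at 2. rewrite Nat.sub_diag. simpl INR. ring. }
  rewrite <- HX, (decomp_sum X (S n)) by lia. simpl pred.
  unfold u_derivative. rewrite (decomp_sum _ (S n)) by lia. simpl pred.
  rewrite Rplus_assoc, <- plus_sum. f_equal.
  - unfold X. rewrite coef_succ_0, Nat.sub_0_r. ring.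
  - apply sum_eq. intros i Hi. unfold X, Y. rewrite coef_succ_succ by exact Hi.
    change (S n - S i)%nat with (n - i)%nat. ring.
Qed.

Lemma Derive_n_u_two_point m n r : 0 < m -> 0 < r ->
  Derive_n (u_two_point m) n r = u_derivative m n r.
Proof.
  intros Hm. revert r. induction n as [| n IH]; intros r Hr.
  - simpl. unfold u_two_point, u_derivative, coef, besselTerm. simpl sum_f_R0.
    rewrite besselK1_besselH. simpl. field. split; [lra | apply PI_neq0].
  - simpl. rewrite (Derive_ext_loc _ (u_derivative m n)).
    + now apply is_derive_unique, u_derivative_derive.
    + exists (mkposreal r Hr). intros y Hy.
      change (Rabs (y - r) < r) in Hy. apply Rabs_def2 in Hy. apply IH. lra.
Qed.

(* With rho = m / M, the estimate of besselH_spec becomes uniform in r >= 1 / M. *)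
Lemma scaled_besselH_bound m M k r : 0 < m <= M -> 1 <= M * r ->
  m ^ S (S k) * besselH k (m * r)
  <= 12 * 4 ^ k * INR (fact k) * M ^ S (S k) * exp (- (m * r)).
Proof.
  intros [Hm HmM] HMr.
  set (rho := m / M).
  assert (HM : 0 < M) by lra.
  assert (Hrho : 0 < rho <= 1).
  { unfold rho. split; [apply Rdiv_lt_0_compat; lra |].
    apply (Rmult_le_reg_r M); [exact HM |]. unfold Rdiv. rewrite Rmult_assoc, Rinv_l; lra. }
  assert (Hrho_mr : rho <= m * r).
  { replace (m * r) with (rho * (M * r)) by (unfold rho; field; lra). nra. }
  destruct (besselH_spec k (m * r) rho Hrho Hrho_mr) as [_ [_ Hbound]].
  replace m with (rho * M) at 1 by (unfold rho; field; lra).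
  rewrite Rpow_mult_distr.
  replace (rho ^ S (S k) * M ^ S (S k) * besselH k (m * r))
    with (M ^ S (S k) * (rho ^ S (S k) * besselH k (m * r))) by ring.
  eapply Rle_trans; [apply Rmult_le_compat_l; [apply pow_le; lra | exact Hbound] |].
  right. ring.
Qed.

Lemma u_summand_bound m M n k r : 0 < m <= M -> 0 < r -> 1 <= M * r -> (k <= n)%nat ->
  Rabs (coef m n k * besselTerm m (n - k) k r)
  <= 4 ^ k * (3 * INR (fact n) * M ^ (n + 3) * exp (- (m * r)) / (PI ^ 2 * m)).
Proof.
  intros HmM Hr HMr Hk.
  assert (Hm : 0 < m) by (destruct HmM; lra).
  assert (Hfk := INR_fact_lt_0 k). assert (Hfn := INR_fact_lt_0 n).
  assert (HPI2 : 0 < PI ^ 2) by (apply pow_lt, PI_RGT_0).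
  set (A := INR (fact n) / (4 * PI ^ 2 * INR (fact k) * m)).
  assert (Hden : 0 < 4 * PI ^ 2 * INR (fact k) * m)
    by (apply Rmult_lt_0_compat; [apply Rmult_lt_0_compat |]; lra).
  assert (HA : 0 < A) by (apply Rdiv_lt_0_compat; lra).
  assert (Hfactor : coef m n k * besselTerm m (n - k) k r
                    = (-1) ^ n * (A * ((/ r) ^ S (n - k) * (m ^ S (S k) * besselH k (m * r))))).
  { pose proof PI_RGT_0. unfold coef, besselTerm, A. simpl (m ^ S (S k)).
    field. repeat split; lra. }
  assert (Hinv_r : (/ r) ^ S (n - k) <= M ^ S (n - k)).
  { apply pow_incr. split; [apply Rlt_le, Rinv_0_lt_compat, Hr |].
    apply (Rmult_le_reg_r r); [exact Hr |]. rewrite Rinv_l; lra. }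
  assert (HH0 : 0 <= m ^ S (S k) * besselH k (m * r))
    by (apply Rmult_le_pos; [apply pow_le; lra | apply besselH_nonneg; nra]).
  rewrite Hfactor, Rabs_mult, pow_1_abs, Rmult_1_l, Rabs_pos_eq.
  2: { apply Rmult_le_pos; [lra |]. apply Rmult_le_pos; [| exact HH0].
       apply pow_le, Rlt_le, Rinv_0_lt_compat, Hr. }
  eapply Rle_trans.
  { apply Rmult_le_compat_l; [lra |].
    apply Rmult_le_compat; [apply pow_le, Rlt_le, Rinv_0_lt_compat, Hr | exact HH0 |
                            exact Hinv_r | apply (scaled_besselH_bound m M); assumption]. }
  replace (n + 3)%nat with (S (n - k) + S (S k))%nat by lia. rewrite pow_add.
  pose proof PI_RGT_0. right. unfold A. field. repeat split; lra.
Qed.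

Lemma geometric_sum_4 n : sum_f_R0 (fun k => 4 ^ k) n <= 4 ^ S n / 3.
Proof.
  induction n as [| n IH]; [simpl; lra |].
  rewrite tech5. change (4 ^ S (S n)) with (4 * 4 ^ S n). lra.
Qed.

Lemma u_derivative_bound m M n r : 0 < m <= M -> 0 < r -> 1 <= M * r ->
  Rabs (u_derivative m n r)
  <= INR (fact n) * M ^ (n + 3) * exp (- (m * r)) * 4 ^ S n / m * / PI ^ 2.
Proof.
  intros HmM Hr HMr.
  set (B := 3 * INR (fact n) * M ^ (n + 3) * exp (- (m * r)) / (PI ^ 2 * m)).
  assert (HB : 0 <= B).
  { pose proof (INR_fact_lt_0 n). pose proof (pow_lt M (n + 3) ltac:(lra)).
    pose proof (exp_pos (- (m * r))). pose proof (pow_lt PI 2 PI_RGT_0).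
    unfold B. apply Rlt_le, Rdiv_lt_0_compat; [| apply Rmult_lt_0_compat; lra].
    apply Rmult_lt_0_compat; [apply Rmult_lt_0_compat; [apply Rmult_lt_0_compat |] |]; lra. }
  unfold u_derivative.
  eapply Rle_trans; [apply sum_f_R0_triangle |].
  eapply Rle_trans.
  { apply (sum_Rle _ (fun k => 4 ^ k * B)). intros k Hk. now apply u_summand_bound. }
  rewrite <- scal_sum.
  eapply Rle_trans; [apply Rmult_le_compat_l; [exact HB | apply geometric_sum_4] |].
  pose proof PI_RGT_0. right. unfold B. field. split; lra.
Qed.

(* The numerical constant: 1 / pi^2 <= 32 / 25 (crudely, since pi > 2). *)
Lemma inv_PI2_le : / PI ^ 2 <= 32 / 25.
Proof.
  pose proof PI2_1. assert (HPI2 : 4 <= PI ^ 2) by nra.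
  apply (Rmult_le_reg_r (PI ^ 2)); [lra |]. rewrite Rinv_l; lra.
Qed.

Lemma Rmax_inv_mul_ge_1 m R0 r : 0 < R0 -> R0 <= r -> 1 <= Rmax m (1 / R0) * r.
Proof.
  intros HR Hr.
  assert (HRM : 1 / R0 <= Rmax m (1 / R0)) by apply Rmax_r.
  apply (Rmult_le_compat_r r) in HRM; [| lra].
  eapply Rle_trans; [| exact HRM].
  apply (Rmult_le_reg_l R0); [exact HR |].
  replace (R0 * (1 / R0 * r)) with r by (field; lra). lra.
Qed.

Theorem mainTheorem10 (m R0 : R) (hm : 0 < m) (hR : 0 < R0) :
  forall (r : R) (n : nat), R0 <= r ->
    Rabs (Derive_n (u_two_point m) n r)
      <= (2 / (25 * m)) * (4 * Rmax m (1 / R0)) ^ (n + 3) * INR (fact n)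
         * exp (- m * r).
Proof.
  intros r n Hr.
  set (M := Rmax m (1 / R0)).
  assert (HmM : 0 < m <= M) by (split; [exact hm | apply Rmax_l]).
  assert (HMr : 1 <= M * r) by now apply Rmax_inv_mul_ge_1.
  rewrite Derive_n_u_two_point by lra.
  eapply Rle_trans; [apply (u_derivative_bound m M); [exact HmM | lra | exact HMr] |].
  (* compare constants: 4^{n+3} = 16 * 4^{n+1} and 16 / pi^2 <= 16 * 32 / 25 *)
  set (X := INR (fact n) * M ^ (n + 3) * exp (- (m * r)) * 4 ^ S n / m).
  assert (HX : 0 <= X).
  { pose proof (INR_fact_lt_0 n). pose proof (pow_lt M (n + 3) ltac:(lra)).
    pose proof (exp_pos (- (m * r))). pose proof (pow_lt 4 (S n) ltac:(lra)).
    unfold X. apply Rlt_le, Rdiv_lt_0_compat; [| exact hm].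
    apply Rmult_lt_0_compat; [apply Rmult_lt_0_compat; [apply Rmult_lt_0_compat |] |]; lra. }
  replace (2 / (25 * m) * (4 * M) ^ (n + 3) * INR (fact n) * exp (- m * r))
    with (X * (32 / 25)).
  - apply Rmult_le_compat_l; [exact HX | exact inv_PI2_le].
  - unfold X. rewrite Rpow_mult_distr.
    replace (4 ^ (n + 3)) with (4 ^ S n * 4 ^ 2) by (rewrite <- pow_add; f_equal; lia).
    replace (- m * r) with (- (m * r)) by ring. field. lra.
Qed.
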